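(* Let $\mathcal{L}$ be a finite set of labels, $\mathcal{C}$ a finite set of classes and $\mathcal{M}$ a finite set of mixins, equipped with types as described in the context, and let $\Delta^{\mathcal{C},\mathcal{M}}_{\mathcal{L}}$ be the repository defined in the context. Let $M_1,\ldots,M_n\in\mathcal{M}$, $C\in\mathcal{C}$, let $\sigma\in\mathbb{T}$ and $\rho\in\mathbb{T}_R$ be types such that $[\![\sigma\to\rho]\!]$ is defined, and let $k\in\mathbb{N}$. If $\Delta^{\mathcal{C},\mathcal{M}}_{\mathcal{L}}\vdash_k C \triangleright M_1\triangleright\cdots\triangleright M_n : [\![\sigma\to\rho]\!]$ in $\mathsf{BCL}_k(\mathbb{T}_C)$, then $\vdash C\triangleright M_1\triangleright\cdots\triangleright M_n : \sigma\to\rho$ in the type assignment system for $\Lambda_R$ (with empty basis).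
   Context: \textbf{The calculus $\Lambda_R$.} Terms: $M,N ::= x \mid \lambda x.M \mid MN \mid M.l \mid R \mid M\oplus R$, records $R ::= \langle l_i = M_i \mid i\in I\rangle$ ($I$ finite, labels $l_i$ pairwise distinct), with $\mathit{lbl}(\langle l_i=M_i\mid i\in I\rangle)=\{l_i\mid i\in I\}$. $\mathbf{Y}=\lambda f.(\lambda x.f(xx))(\lambda x.f(xx))$. A class is a closed term of the form $\mathbf{Y}(\lambda\,\mathit{myClass}\,\lambda\,\mathit{state}.\,R)$; a mixin is a closed term of the form $\lambda\,\mathit{argClass}.\,\mathbf{Y}(\lambda\,\mathit{myClass}\,\lambda\,\mathit{state}.\,(\mathit{argClass}\;\mathit{state})\oplus R_M)$ where $R_M$ is a record (called the record of the mixin). \textbf{Types for $\Lambda_R$.} $\mathbb{T}\ni\sigma ::= a\mid\omega\mid\sigma_1\to\sigma_2\mid\sigma_1\cap\sigma_2\mid\rho$ and record types $\mathbb{T}_R\ni\rho ::= \langle\rangle\mid\langle l:\sigma\rangle\mid\rho_1+\rho_2\mid\rho_1\cap\rho_2$ ($a$ type constants, $l$ labels). Subtyping $\le$ is the least preorder with: $\sigma\le\omega$; $\omega\le\omega\to\omega$; $\sigma\cap\tau\le\sigma$; $\sigma\cap\tau\le\tau$; $\sigma\le\tau_1,\sigma\le\tau_2\Rightarrow\sigma\le\tau_1\cap\tau_2$; $(\sigma\to\tau_1)\cap(\sigma\to\tau_2)\le\sigma\to\tau_1\cap\tau_2$; $\sigma_2\le\sigma_1,\tau_1\le\tau_2\Rightarrow\sigma_1\to\tau_1\le\sigma_2\to\tau_2$;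 $\langle l:\sigma\rangle\le\langle\rangle$; $\langle l:\sigma\rangle\cap\langle l:\tau\rangle\le\langle l:\sigma\cap\tau\rangle$; $\sigma\le\tau\Rightarrow\langle l:\sigma\rangle\le\langle l:\tau\rangle$; $\rho+\langle\rangle=\langle\rangle+\rho=\rho$; $(\rho_1+\rho_2)+\rho_3=\rho_1+(\rho_2+\rho_3)$; $(\rho_1\cap\rho_2)+\rho_3=(\rho_1+\rho_3)\cap(\rho_2+\rho_3)$; $\langle l:\sigma\rangle+(\langle l:\tau\rangle\cap\rho)=\langle l:\tau\rangle\cap\rho$; $\langle l:\sigma\rangle+(\langle l':\tau\rangle\cap\rho)=\langle l':\tau\rangle\cap(\langle l:\sigma\rangle+\rho)$ if $l\neq l'$; $\rho_1\le\rho_2\Rightarrow\rho_1+\rho\le\rho_2+\rho$; $\rho_1=\rho_2\Rightarrow\rho+\rho_1=\rho+\rho_2$. Here $\sigma=\tau$ means $\sigma\le\tau$ and $\tau\le\sigma$. Write $\langle l_i:\sigma_i\mid i\in I\rangle$ for $\bigcap_{i\in I}\langle l_i:\sigma_i\rangle$ (and $\langle\rangle$ if $I=\emptyset$). $\mathit{lbl}(\langle\rangle)=\emptyset$, $\mathit{lbl}(\langle l:\sigma\rangle)=\{l\}$, $\mathit{lbl}(\rho_1\cap\rho_2)=\mathit{lbl}(\rho_1+\rho_2)=\mathit{lbl}(\rho_1)\cup\mathit{lbl}(\rho_2)$. \textbf{Type assignment for $\Lambda_R$} (judgments $\Gamma\vdash M:\sigma$, $\Gamma$ a finite set of assumptions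 $x:\sigma$ with distinct variables): axiom $\Gamma\vdash x:\sigma$ if $x:\sigma\in\Gamma$; $\to$-introduction and elimination as usual; $\cap$-introduction; $\Gamma\vdash M:\omega$; subsumption along $\le$; $\Gamma\vdash\langle l_i=M_i\mid i\in I\rangle:\langle\rangle$; from $\Gamma\vdash M_k:\sigma$, $k\in I$ infer $\Gamma\vdash\langle l_i=M_i\mid i\in I\rangle:\langle l_k:\sigma\rangle$; from $\Gamma\vdash M:\langle l:\sigma\rangle$ infer $\Gamma\vdash M.l:\sigma$; from $\Gamma\vdash M:\rho_1$, $\Gamma\vdash R:\rho_2$ and $\mathit{lbl}(R)=\mathit{lbl}(\rho_2)$ infer $\Gamma\vdash M\oplus R:\rho_1+\rho_2$. \textbf{$\mathsf{BCL}_k(\mathbb{T}_C)$.} Types $\mathbb{T}_C\ni\tau ::= a\mid\alpha\mid\omega\mid\tau_1\to\tau_2\mid\tau_1\cap\tau_2\mid c(\tau)$ ($\alpha$ type variables, $c$ unary constructors), subtyping: the arrow/intersection axioms above together with $\tau_1\le\tau_2\Rightarrow c(\tau_1)\le c(\tau_2)$ and $c(\tau_1)\cap c(\tau_2)\le c(\tau_1\cap\tau_2)$. Level: $\mathrm{level}(\omega)=\mathrm{level}(a)=\mathrm{level}(\alpha)=0$, $\mathrm{level}(c(\tau))=1+\mathrm{level}(\tau)$, $\mathrm{level}(\sigma\to\tau)=1+\max(\mathrm{level}(\sigma),\mathrm{level}(\tau))$, $\mathrm{level}(\sigma\cap\tau)=\max(\mathrm{level}(\sigma),\mathrm{level}(\tau))$;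 for a substitution $S$ of types for type variables, $\mathrm{level}(S)=\max_{\alpha\in\mathrm{dom}(S)}\mathrm{level}(S(\alpha))$. A repository $\Delta$ is a finite set of typed combinator names $C:\tau$; combinatory terms are $E::=C\mid(E\,E')$ with $C\in\mathrm{dom}(\Delta)$. Rules: from $C:\tau\in\Delta$ and $\mathrm{level}(S)\le k$ infer $\Delta\vdash_k C:S(\tau)$; $\to$-elimination; $\cap$-introduction; subsumption. \textbf{Translation.} Fix a finite set of labels $\mathcal{L}$; use a unary constructor $\langle\!\langle\cdot\rangle\!\rangle$ and a unary constructor $l(\cdot)$ for each $l\in\mathcal{L}$. The partial map $[\![\cdot]\!]:\mathbb{T}\to\mathbb{T}_C$ is $[\![\omega]\!]=\omega$, $[\![a]\!]=a$, $[\![\sigma\to\tau]\!]=[\![\sigma]\!]\to[\![\tau]\!]$, $[\![\sigma\cap\tau]\!]=[\![\sigma]\!]\cap[\![\tau]\!]$, $[\![\langle l:\tau\rangle]\!]=\langle\!\langle l([\![\tau]\!])\rangle\!\rangle$ ($l\in\mathcal{L}$), $[\![\langle\rangle]\!]=\langle\!\langle\omega\rangle\!\rangle$; it is undefined on types containing $+$. \textbf{Setting.} $\mathcal{C}$ is a finite set of classes; for each $C\in\mathcal{C}$ types $\sigma_C\in\mathbb{T}$, $\rho_C\in\mathbb{T}_R$ with $[\![\sigma_C\to\rho_C]\!]$ defined and $\vdash C:\sigma_C\to\rho_C$. $\mathcal{M}$ is a finite set of mixins; for each $M\in\mathcal{M}$ types $\sigma_M\in\mathbb{T}$, $\rho^1_M,\rho^2_M\in\mathbb{T}_R$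 with $[\![\sigma_M]\!],[\![\rho^1_M]\!],[\![\rho^2_M]\!]$ defined such that for all $\rho\in\mathbb{T}_R$, $\vdash M:(\sigma_M\to\rho\cap\rho^1_M)\to(\sigma_M\to\rho+\rho^2_M)$; and $L_M=\mathit{lbl}(\rho^2_M)\subseteq\mathcal{L}$ is the non-empty set of labels defined by $M$ (the labels of its record $R_M$). The repository is $\Delta^{\mathcal{C},\mathcal{M}}_{\mathcal{L}}=\{C:[\![\sigma_C\to\rho_C]\!]\mid C\in\mathcal{C}\}\cup\{M:((\![\![\sigma_M]\!]\to[\![\rho^1_M]\!])\to([\![\sigma_M]\!]\to[\![\rho^2_M]\!]))\cap\bigcap_{l\in\mathcal{L}\setminus L_M}((\![\![\sigma_M]\!]\to\langle\!\langle l(\alpha_l)\rangle\!\rangle)\to([\![\sigma_M]\!]\to\langle\!\langle l(\alpha_l)\rangle\!\rangle))\mid M\in\mathcal{M}\}$, with distinct type variables $\alpha_l$. Notation: $x\triangleright f$ stands for $f\,x$, left associative, so $C\triangleright M_1\triangleright\cdots\triangleright M_n=M_n(\cdots(M_1\,C))$ (read as a combinatory term over the names in the repository, and as a $\Lambda_R$ term). *)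

From mathcomp Require Import all_boot.
Set Implicit Arguments.
Unset Strict Implicit.
Unset Printing Implicit Defensive.

Definition label := nat.

(*  Types of Lambda_R.  One syntax; the grammar of T and T_R is enforced  *)
(*  by the predicates [wf] (membership in T) and [isRec] (in T_R).        *)
Inductive ty : Type :=
| TConst : nat -> ty
| TOmega : ty
| TArr   : ty -> ty -> ty
| TInt   : ty -> ty -> ty
| TEmpty : ty
| TField : label -> ty -> ty
| TPlus  : ty -> ty -> ty.

Fixpoint wf (t : ty) : bool :=
  match t with
  | TConst _ | TOmega | TEmpty => true
  | TArr a b | TInt a b => wf a && wf b
  | TField _ s => wf s
  | TPlus a b => isRec a && isRec b
  end
with isRec (t : ty) : bool :=
  match t with
  | TEmpty => true
  | TField _ s => wf s
  | TPlus a b | TInt a b => isRec a && isRec b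
  | _ => false
  end.

Fixpoint lbl (t : ty) : seq label :=
  match t with
  | TField l _ => [:: l]
  | TInt a b | TPlus a b => lbl a ++ lbl b
  | _ => [::]
  end.

Inductive sub : ty -> ty -> Prop :=
| sub_refl s : wf s -> sub s s
| sub_trans s t u : sub s t -> sub t u -> sub s u
| sub_omega s : wf s -> sub s TOmega
| sub_omega_arr : sub TOmega (TArr TOmega TOmega)
| sub_int_l s t : wf s -> wf t -> sub (TInt s t) s
| sub_int_r s t : wf s -> wf t -> sub (TInt s t) t
| sub_int_glb s t1 t2 : sub s t1 -> sub s t2 -> sub s (TInt t1 t2)
| sub_arr_dist s t1 t2 : wf s -> wf t1 -> wf t2 ->
    sub (TInt (TArr s t1) (TArr s t2)) (TArr s (TInt t1 t2))
| sub_arr s1 s2 t1 t2 : sub s2 s1 -> sub t1 t2 -> sub (TArr s1 t1) (TArr s2 t2)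
| sub_field_empty l s : wf s -> sub (TField l s) TEmpty
| sub_field_int l s t : wf s -> wf t ->
    sub (TInt (TField l s) (TField l t)) (TField l (TInt s t))
| sub_field l s t : sub s t -> sub (TField l s) (TField l t)
| sub_plus_empty_r1 r : isRec r -> sub (TPlus r TEmpty) r
| sub_plus_empty_r2 r : isRec r -> sub r (TPlus r TEmpty)
| sub_plus_empty_l1 r : isRec r -> sub (TPlus TEmpty r) r
| sub_plus_empty_l2 r : isRec r -> sub r (TPlus TEmpty r)
| sub_plus_assoc1 r1 r2 r3 : isRec r1 -> isRec r2 -> isRec r3 ->
    sub (TPlus (TPlus r1 r2) r3) (TPlus r1 (TPlus r2 r3))
| sub_plus_assoc2 r1 r2 r3 : isRec r1 -> isRec r2 -> isRec r3 ->
    sub (TPlus r1 (TPlus r2 r3)) (TPlus (TPlus r1 r2) r3)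
| sub_plus_int1 r1 r2 r3 : isRec r1 -> isRec r2 -> isRec r3 ->
    sub (TPlus (TInt r1 r2) r3) (TInt (TPlus r1 r3) (TPlus r2 r3))
| sub_plus_int2 r1 r2 r3 : isRec r1 -> isRec r2 -> isRec r3 ->
    sub (TInt (TPlus r1 r3) (TPlus r2 r3)) (TPlus (TInt r1 r2) r3)
| sub_plus_same1 l s t r : wf s -> wf t -> isRec r ->
    sub (TPlus (TField l s) (TInt (TField l t) r)) (TInt (TField l t) r)
| sub_plus_same2 l s t r : wf s -> wf t -> isRec r ->
    sub (TInt (TField l t) r) (TPlus (TField l s) (TInt (TField l t) r))
| sub_plus_diff1 l l' s t r : l <> l' -> wf s -> wf t -> isRec r ->
    sub (TPlus (TField l s) (TInt (TField l' t) r))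
        (TInt (TField l' t) (TPlus (TField l s) r))
| sub_plus_diff2 l l' s t r : l <> l' -> wf s -> wf t -> isRec r ->
    sub (TInt (TField l' t) (TPlus (TField l s) r))
        (TPlus (TField l s) (TInt (TField l' t) r))
| sub_plus_mono r1 r2 r : isRec r1 -> isRec r2 -> isRec r ->
    sub r1 r2 -> sub (TPlus r1 r) (TPlus r2 r)
(* r1 = r2  =>  r + r1 = r + r2 (the symmetric half is the same rule) *)
| sub_plus_cong r r1 r2 : isRec r -> isRec r1 -> isRec r2 ->
    sub r1 r2 -> sub r2 r1 -> sub (TPlus r r1) (TPlus r r2).

(*  Terms of Lambda_R (de Bruijn indices).  [Ext M fs] is M (+) <fs>.     *)
Inductive tm : Type :=
| Var  : nat -> tm
| Lam  : tm -> tm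
| App  : tm -> tm -> tm
| Proj : tm -> label -> tm
| Rec  : fields -> tm
| Ext  : tm -> fields -> tm
with fields : Type :=
| FNil  : fields
| FCons : label -> tm -> fields -> fields.

Fixpoint flist (fs : fields) : seq (label * tm) :=
  match fs with FNil => [::] | FCons l M r => (l, M) :: flist r end.

Fixpoint fin (l : label) (M : tm) (fs : fields) : Prop :=
  match fs with FNil => False | FCons l' M' r => (l = l' /\ M = M') \/ fin l M r end.

Definition flabels (fs : fields) : seq label := map fst (flist fs).

Fixpoint closed_at (n : nat) (t : tm) : bool :=
  match t with
  | Var i => i < n
  | Lam M => closed_at n.+1 M
  | App M N => closed_at n M && closed_at n N
  | Proj M _ => closed_at n M
  | Rec fs => fclosed_at n fs
  | Ext M fs => closed_at n M && fclosed_at n fs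
  end
with fclosed_at (n : nat) (fs : fields) : bool :=
  match fs with
  | FNil => true
  | FCons _ M r => closed_at n M && fclosed_at n r
  end.

Definition closed (t : tm) : bool := closed_at 0 t.

(* Y = \f.(\x.f(xx))(\x.f(xx)) *)
Definition Yc : tm :=
  Lam (App (Lam (App (Var 1) (App (Var 0) (Var 0))))
           (Lam (App (Var 1) (App (Var 0) (Var 0))))).

Definition is_class (C : tm) : Prop :=
  closed C /\ exists fs, uniq (flabels fs) /\ C = App Yc (Lam (Lam (Rec fs))).

(* A mixin with record R_M = fs:
   \argClass. Y (\myClass \state. (argClass state) (+) R_M). *)
Definition is_mixin_with (M : tm) (fs : fields) : Prop :=
  closed M /\ uniq (flabels fs) /\
  M = Lam (App Yc (Lam (Lam (Ext (App (Var 2) (Var 0)) fs)))).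

Inductive typ : seq ty -> tm -> ty -> Prop :=
| typ_var G i : i < size G -> typ G (Var i) (nth TOmega G i)
| typ_lam G M s t : wf s -> typ (s :: G) M t -> typ G (Lam M) (TArr s t)
| typ_app G M N s t : typ G M (TArr s t) -> typ G N s -> typ G (App M N) t
| typ_int G M s t : typ G M s -> typ G M t -> typ G M (TInt s t)
| typ_omega G M : typ G M TOmega
| typ_sub G M s t : typ G M s -> sub s t -> typ G M t
| typ_rec_empty G fs : uniq (flabels fs) -> typ G (Rec fs) TEmpty
| typ_rec_field G fs l M s : uniq (flabels fs) -> fin l M fs ->
    typ G M s -> typ G (Rec fs) (TField l s)
| typ_proj G M l s : typ G M (TField l s) -> typ G (Proj M l) s
| typ_ext G M fs r1 r2 : isRec r1 -> isRec r2 ->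
    typ G M r1 -> typ G (Rec fs) r2 -> flabels fs =i lbl r2 ->
    typ G (Ext M fs) (TPlus r1 r2).

Inductive ccons : Type := CRecord | CLabel of label.

Inductive ctype : Type :=
| CConst : nat -> ctype
| CTVar  : nat -> ctype
| COmega : ctype
| CArr   : ctype -> ctype -> ctype
| CInt   : ctype -> ctype -> ctype
| CCons  : ccons -> ctype -> ctype.

Inductive csub : ctype -> ctype -> Prop :=
| csub_refl t : csub t t
| csub_trans s t u : csub s t -> csub t u -> csub s u
| csub_omega s : csub s COmega
| csub_omega_arr : csub COmega (CArr COmega COmega)
| csub_int_l s t : csub (CInt s t) s
| csub_int_r s t : csub (CInt s t) t
| csub_int_glb s t1 t2 : csub s t1 -> csub s t2 -> csub s (CInt t1 t2)
| csub_arr_dist s t1 t2 :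
    csub (CInt (CArr s t1) (CArr s t2)) (CArr s (CInt t1 t2))
| csub_arr s1 s2 t1 t2 : csub s2 s1 -> csub t1 t2 -> csub (CArr s1 t1) (CArr s2 t2)
| csub_cons c t1 t2 : csub t1 t2 -> csub (CCons c t1) (CCons c t2)
| csub_cons_int c t1 t2 : csub (CInt (CCons c t1) (CCons c t2)) (CCons c (CInt t1 t2)).

Fixpoint level (t : ctype) : nat :=
  match t with
  | CConst _ | CTVar _ | COmega => 0
  | CCons _ s => (level s).+1
  | CArr a b => (maxn (level a) (level b)).+1
  | CInt a b => maxn (level a) (level b)
  end.

Fixpoint csubst (S : nat -> ctype) (t : ctype) : ctype :=
  match t with
  | CTVar a => S a
  | CArr a b => CArr (csubst S a) (csubst S b)
  | CInt a b => CInt (csubst S a) (csubst S b)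
  | CCons c s => CCons c (csubst S s)
  | t => t
  end.

Inductive cterm (N : Type) : Type :=
| CName : N -> cterm N
| CApp  : cterm N -> cterm N -> cterm N.
Arguments CName {N}.
Arguments CApp {N}.

(* Delta |-_k E : t ; a substitution S acts as the identity outside its
   domain, so level(S) <= k is "every S a has level <= k". *)
Inductive bcl (N : Type) (Delta : N -> ctype) (k : nat) : cterm N -> ctype -> Prop :=
| bcl_var C S : (forall a, level (S a) <= k) -> bcl Delta k (CName C) (csubst S (Delta C))
| bcl_app E1 E2 s t : bcl Delta k E1 (CArr s t) -> bcl Delta k E2 s ->
    bcl Delta k (CApp E1 E2) t
| bcl_int E s t : bcl Delta k E s -> bcl Delta k E t -> bcl Delta k E (CInt s t)
| bcl_sub E s t : bcl Delta k E s -> csub s t -> bcl Delta k E t.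

Definition crec (t : ctype) : ctype := CCons CRecord t.

Fixpoint trans (L : seq label) (t : ty) : option ctype :=
  match t with
  | TConst a => Some (CConst a)
  | TOmega => Some COmega
  | TArr a b =>
      match trans L a, trans L b with Some x, Some y => Some (CArr x y) | _, _ => None end
  | TInt a b =>
      match trans L a, trans L b with Some x, Some y => Some (CInt x y) | _, _ => None end
  | TField l s =>
      if l \in L then
        match trans L s with Some x => Some (crec (CCons (CLabel l) x)) | None => None end
      else None
  | TEmpty => Some (crec COmega)
  | TPlus _ _ => None
  end.

Definition defined (o : option ctype) : bool := if o is Some _ then true else false.
Definition tr (L : seq label) (t : ty) : ctype := odflt COmega (trans L t).

(* The repository Delta^{C,M}_L; names are classes (inl) and mixins (inr).
   alpha_l is the type variable CTVar l. *)
Definition mixin_ctype (L : seq label) (sM r1M r2M : ty) : ctype :=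
  let s' := tr L sM in
  foldr (fun l acc =>
           CInt acc (CArr (CArr s' (crec (CCons (CLabel l) (CTVar l))))
                          (CArr s' (crec (CCons (CLabel l) (CTVar l))))))
        (CArr (CArr s' (tr L r1M)) (CArr s' (tr L r2M)))
        [seq l <- L | l \notin lbl r2M].

Definition repo (IC IM : Type) (L : seq label)
  (sC rC : IC -> ty) (sM r1M r2M : IM -> ty) (x : IC + IM) : ctype :=
  match x with
  | inl c => tr L (TArr (sC c) (rC c))
  | inr m => mixin_ctype L (sM m) (r1M m) (r2M m)
  end.

(* C |> M1 |> ... |> Mn, as a combinatory term and as a Lambda_R term *)
Definition pipe_c (IC IM : Type) (c : IC) (ms : seq IM) : cterm (IC + IM) :=
  foldl (fun E m => CApp (CName (inr m)) E) (CName (inl c)) ms.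

Definition pipe_t (IC IM : Type) (cls : IC -> tm) (mix : IM -> tm)
  (c : IC) (ms : seq IM) : tm :=
  foldl (fun E m => App (mix m) E) (cls c) ms.

From mathcomp Require Import all_boot.
Set Implicit Arguments.
Unset Strict Implicit.
Unset Printing Implicit Defensive.

(* Read a BCL type back as a Lambda_R type: the argument of <<.>> is read as a
   record type (l(t) giving <l : t>), type variables and stray label
   constructors as omega.  This reading is monotone for subtyping and undoes
   the translation up to type equivalence, so a BCL derivation of
   C |> M1 |> ... |> Mn becomes a Lambda_R derivation by induction, once every
   instance of a repository type is read back to a type of its combinator.
   For the alpha_l components of a mixin type this holds because a mixin
   copies every field of its argument class that it does not itself define. *)

Lemma isRec_wf t : isRec t -> wf t.
Proof. by elim: t => //= a IHa b IHb /andP[/IHa -> /IHb]. Qed.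

Lemma sub_wf s t : sub s t -> wf s /\ wf t.
Proof.
elim=> //= *;
repeat match goal with
  | H : _ /\ _ |- _ => case: H => ? ?
  | H : is_true (_ && _) |- _ => case/andP: H => ? ?
  end;
repeat match goal with
  | |- is_true (_ && _) => apply/andP; split
  | |- _ /\ _ => split
  end; by [|apply: isRec_wf].
Qed.

Lemma sub_int_cong a b a' b' : sub a a' -> sub b b' -> sub (TInt a b) (TInt a' b').
Proof.
move=> haa hbb; have [wa _] := sub_wf haa; have [wb _] := sub_wf hbb.
apply: sub_int_glb.
- exact: sub_trans (sub_int_l wa wb) haa.
- exact: sub_trans (sub_int_r wa wb) hbb.
Qed.

Fixpoint untr (t : ctype) : ty :=
  match t with
  | CConst a => TConst a
  | CTVar _ | COmega => TOmega
  | CArr x y => TArr (untr x) (untr y)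
  | CInt x y => TInt (untr x) (untr y)
  | CCons CRecord x => untr_rec x
  | CCons (CLabel _) _ => TOmega
  end
with untr_rec (t : ctype) : ty :=
  match t with
  | CCons (CLabel l) y => TField l (untr y)
  | CInt x y => TInt (untr_rec x) (untr_rec y)
  | _ => TEmpty
  end.

Lemma untr_wf_both t : wf (untr t) /\ wf (untr_rec t).
Proof.
elim: t => [| | |x [h1 h2] y [h3 h4]|x [h1 h2] y [h3 h4]|[|l] x [h1 h2]] /=;
by rewrite ?h1 ?h2 ?h3 ?h4.
Qed.

Lemma untr_wf t : wf (untr t). Proof. by case: (untr_wf_both t). Qed.
Lemma untr_rec_wf t : wf (untr_rec t). Proof. by case: (untr_wf_both t). Qed.

Lemma untr_rec_sub_empty t : sub (untr_rec t) TEmpty.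
Proof.
elim: t => [n|n||x _ y _|x IHx y _|[|l] x _] /=; try by apply: sub_refl.
- exact: sub_trans (sub_int_l (untr_rec_wf x) (untr_rec_wf y)) IHx.
- exact: sub_field_empty (untr_wf x).
Qed.

Lemma csub_untr s t : csub s t -> sub (untr s) (untr t) /\ sub (untr_rec s) (untr_rec t).
Proof.
elim=> {s t} /=.
- by move=> t; split; apply: sub_refl; rewrite ?untr_wf ?untr_rec_wf.
- by move=> s t u _ [h1 h2] _ [h3 h4]; split; [exact: sub_trans h1 h3 | exact: sub_trans h2 h4].
- by move=> s; split; [exact: sub_omega (untr_wf s) | exact: untr_rec_sub_empty].
- by split; [exact: sub_omega_arr | exact: sub_refl].
- by move=> s t; split; apply: sub_int_l; rewrite ?untr_wf ?untr_rec_wf.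
- by move=> s t; split; apply: sub_int_r; rewrite ?untr_wf ?untr_rec_wf.
- by move=> s t1 t2 _ [h1 h2] _ [h3 h4]; split; apply: sub_int_glb.
- move=> s t1 t2; split; last by apply: sub_int_l.
  by apply: sub_arr_dist; rewrite ?untr_wf.
- by move=> s1 s2 t1 t2 _ [h1 _] _ [h3 _]; split; [exact: sub_arr | exact: sub_refl].
- move=> [|l] t1 t2 _ [h1 h2] /=; split => //; last exact: sub_field.
  + exact: sub_refl.
  + exact: sub_refl.
- case=> [|l] t1 t2 /=; split.
  + by apply: sub_refl; rewrite /= !untr_rec_wf.
  + by apply: sub_int_l.
  + by apply: sub_omega.
  + by apply: sub_field_int; rewrite ?untr_wf.
Qed.

Lemma trans_untr L A x :
  trans L A = Some x -> wf A -> sub (untr x) A /\ sub A (untr x).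
Proof.
elim: A x => [a||a IHa b IHb|a IHa b IHb||l s IHs|//] x /=.
- by case=> <- _; split; apply: sub_refl.
- by case=> <- _; split; apply: sub_refl.
- case ea: (trans L a) => [y|//]; case eb: (trans L b) => [z|//] [<-] /andP[wa wb].
  have [h1 h2] := IHa _ ea wa; have [h3 h4] := IHb _ eb wb.
  by split; apply: sub_arr.
- case ea: (trans L a) => [y|//]; case eb: (trans L b) => [z|//] [<-] /andP[wa wb].
  have [h1 h2] := IHa _ ea wa; have [h3 h4] := IHb _ eb wb.
  by split; apply: sub_int_cong.
- by case=> <- _; split; apply: sub_refl.
- case: (l \in L) => //; case es: (trans L s) => [y|//] [<-] ws.
  by have [h1 h2] := IHs _ es ws; split; apply: sub_field.
Qed.

Lemma typ_untr_tr G M L A :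
  wf A -> defined (trans L A) -> typ G M A -> typ G M (untr (tr L A)).
Proof.
rewrite /tr => wA; case e: (trans L A) => [x|//] _ /= hM.
by have [_ hx] := trans_untr e wA; apply: typ_sub hM hx.
Qed.

Lemma trans_csubst L S A x : trans L A = Some x -> csubst S x = x.
Proof.
elim: A x => [a||a IHa b IHb|a IHa b IHb||l s IHs|//] x /=.
- by case=> <-.
- by case=> <-.
- case ea: (trans L a) => [y|//]; case eb: (trans L b) => [z|//] [<-] /=.
  by rewrite (IHa _ ea) (IHb _ eb).
- case ea: (trans L a) => [y|//]; case eb: (trans L b) => [z|//] [<-] /=.
  by rewrite (IHa _ ea) (IHb _ eb).
- by case=> <-.
- case: (l \in L) => //; case es: (trans L s) => [y|//] [<-] /=.
  by rewrite (IHs _ es).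
Qed.

Lemma tr_csubst L S A : csubst S (tr L A) = tr L A.
Proof. by rewrite /tr; case e: (trans L A) => [x|//] /=; apply: trans_csubst e. Qed.

Lemma trans_rec_sub_empty L r x : isRec r -> trans L r = Some x -> sub r TEmpty.
Proof.
elim: r x => [||a IHa b _|a IHa b _||l s _|//] x //=.
- move=> /andP[ra rb]; case ea: (trans L a) => [y|//]; case: (trans L b) => [z|//] _.
  exact: sub_trans (sub_int_l (isRec_wf ra) (isRec_wf rb)) (IHa _ ra ea).
- by move=> _ _; apply: sub_refl.
- by move=> ws _; apply: sub_field_empty.
Qed.

Definition omega_fields (ls : seq label) : ty :=
  foldr (fun l acc => TInt (TField l TOmega) acc) TEmpty ls.

Lemma omega_fields_rec ls : isRec (omega_fields ls). Proof. by elim: ls. Qed.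

Lemma lbl_omega_fields ls : lbl (omega_fields ls) = ls.
Proof. by elim: ls => //= l ls ->. Qed.

Lemma fin_flabels l fs : l \in flabels fs -> exists M, fin l M fs.
Proof.
elim: fs => [//|l' M fs IH]; rewrite /flabels /= inE => /orP[/eqP->|/IH[M' h]].
- by exists M; left.
- by exists M'; right.
Qed.

Lemma typ_rec_omega_fields G fs ls :
  uniq (flabels fs) -> {subset ls <= flabels fs} -> typ G (Rec fs) (omega_fields ls).
Proof.
move=> ufs; elim: ls => [|l ls IH] hls /=; first exact: typ_rec_empty.
have [M hM] := fin_flabels (hls l (mem_head _ _)).
apply: typ_int; first exact: typ_rec_field ufs hM (typ_omega _ _).
by apply: IH => x hx; apply: hls; rewrite inE hx orbT.
Qed.

Lemma sub_plus_omega_fields l X ls :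
  wf X -> l \notin ls -> sub (TPlus (TField l X) (omega_fields ls)) (TField l X).
Proof.
move=> wX; elim: ls => [|l' ls IH] /=; first by move=> _; apply: sub_plus_empty_r1.
rewrite inE negb_or => /andP[/eqP ne /IH hls].
apply: sub_trans (sub_plus_diff1 (t := TOmega) ne wX erefl (omega_fields_rec ls)) _.
by apply: sub_trans (sub_int_r _ _) hls; rewrite //= wX omega_fields_rec.
Qed.

Lemma typ_Yc G T : wf T -> typ G Yc (TArr (TArr TOmega T) T).
Proof.
move=> wT; apply: typ_lam; first by rewrite /= wT.
apply: (typ_app (s := TOmega)); last exact: typ_omega.
apply: typ_lam => //; apply: (typ_app (s := TOmega)); last exact: typ_omega.
exact: (typ_var (G := [:: TOmega, TArr TOmega T & G]) (i := 1) erefl).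
Qed.

(* The record of the mixin is typed with omega fields only, which [+] then
   discards in favour of the field l coming from the argument class. *)
Lemma typ_mixin_field G M fs P l X :
  is_mixin_with M fs -> wf P -> wf X -> l \notin flabels fs ->
  typ G M (TArr (TArr P (TField l X)) (TArr P (TField l X))).
Proof.
move=> [_ [ufs ->]] wP wX hl.
set A := TArr P (TField l X).
set T := TArr P (TPlus (TField l X) (omega_fields (flabels fs))).
have wT : wf T by rewrite /= wP wX omega_fields_rec.
apply: typ_lam; first by rewrite /= wP wX.
apply: (typ_sub (s := T)); last first.
  by apply: sub_arr; [apply: sub_refl | apply: sub_plus_omega_fields].
apply: (typ_app (s := TArr TOmega T)); first exact: typ_Yc.
do 2!apply: typ_lam => //.
apply: typ_ext => //; first exact: omega_fields_rec.
- apply: (typ_app (s := P)).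
  + exact: (typ_var (G := [:: P, TOmega, A & G]) (i := 2) erefl).
  + exact: (typ_var (G := [:: P, TOmega, A & G]) (i := 0) erefl).
- exact: typ_rec_omega_fields.
- by move=> x; rewrite lbl_omega_fields.
Qed.

Section MixinType.

Variables (L : seq label) (M : tm) (fs : fields) (sM r1M r2M : ty).
Hypothesis M_form : is_mixin_with M fs.
Hypothesis M_labels : flabels fs =i lbl r2M.
Hypothesis sM_wf : wf sM.
Hypothesis r1M_rec : isRec r1M.
Hypothesis r2M_rec : isRec r2M.
Hypothesis M_def :
  [&& defined (trans L sM), defined (trans L r1M) & defined (trans L r2M)].
Hypothesis M_typ : forall rho, isRec rho ->
  typ [::] M (TArr (TArr sM (TInt rho r1M)) (TArr sM (TPlus rho r2M))).

(* The main component is the instance rho = <> of the typing of M. *)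
Lemma typ_mixin_main :
  typ [::] M (untr (CArr (CArr (tr L sM) (tr L r1M)) (CArr (tr L sM) (tr L r2M)))).
Proof.
move: M_def; rewrite /tr.
case e0: (trans L sM) => [x0|//]; case e1: (trans L r1M) => [x1|//].
case e2: (trans L r2M) => [x2|//] _ /=.
have [a0 b0] := trans_untr e0 sM_wf.
have [a1 _] := trans_untr e1 (isRec_wf r1M_rec).
have [_ b2] := trans_untr e2 (isRec_wf r2M_rec).
apply: typ_sub (M_typ (rho := TEmpty) erefl) _.
apply: sub_arr; apply: sub_arr => //.
- apply: sub_trans a1 (sub_int_glb (trans_rec_sub_empty r1M_rec e1) _).
  exact: sub_refl (isRec_wf r1M_rec).
- exact: sub_trans (sub_plus_empty_l1 r2M_rec) b2.
Qed.

Lemma typ_mixin_repo S : typ [::] M (untr (csubst S (mixin_ctype L sM r1M r2M))).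
Proof.
rewrite /mixin_ctype.
have : {in [seq l <- L | l \notin lbl r2M], forall l, l \notin flabels fs}.
  by move=> l; rewrite mem_filter M_labels => /andP[].
elim: [seq l <- L | l \notin lbl r2M] => [|l ls IH] hls /=.
  by rewrite !tr_csubst; apply: typ_mixin_main.
apply: typ_int; first by apply: IH => x hx; apply: hls; rewrite inE hx orbT.
rewrite tr_csubst /=.
by apply: typ_mixin_field M_form (untr_wf _) (untr_wf _) (hls _ (mem_head _ _)).
Qed.

End MixinType.

Fixpoint cterm_eval (N : Type) (f : N -> tm) (E : cterm N) : tm :=
  match E with
  | CName x => f x
  | CApp E1 E2 => App (cterm_eval f E1) (cterm_eval f E2)
  end.

Lemma bcl_untr_sound (N : Type) (Delta : N -> ctype) (f : N -> tm) G k :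
  (forall x S, typ G (f x) (untr (csubst S (Delta x)))) ->
  forall E t, bcl Delta k E t -> typ G (cterm_eval f E) (untr t).
Proof.
move=> f_typ E t; elim=> {E t} /=.
- by move=> x S _; apply: f_typ.
- by move=> E1 E2 s t _ h1 _ h2; apply: typ_app h1 h2.
- by move=> E s t _ h1 _ h2; apply: typ_int h1 h2.
- by move=> E s t _ h /csub_untr[hst _]; apply: typ_sub h hst.
Qed.

Lemma cterm_eval_pipe (IC IM : Type) (cls : IC -> tm) (mix : IM -> tm) c ms :
  cterm_eval (fun x => match x with inl c => cls c | inr m => mix m end) (pipe_c c ms)
  = pipe_t cls mix c ms.
Proof.
set f := fun x => _; rewrite /pipe_c /pipe_t.
have : cterm_eval f (CName (inl c)) = cls c by [].
elim: ms (CName (inl c)) (cls c) => [|m ms IH] E t //= hE.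
by apply: IH; rewrite /= hE.
Qed.

Theorem theorem5p4
  (L : seq label)
  (IC IM : finType) (cls : IC -> tm) (mix : IM -> tm)
  (sC rC : IC -> ty) (sM r1M r2M : IM -> ty)
  (* classes *)
  (cls_inj : injective cls)
  (cls_form : forall c, is_class (cls c))
  (cls_wf : forall c, wf (sC c) && isRec (rC c))
  (cls_def : forall c, defined (trans L (TArr (sC c) (rC c))))
  (cls_typ : forall c, typ [::] (cls c) (TArr (sC c) (rC c)))
  (* mixins *)
  (mix_inj : injective mix)
  (mix_form : forall m, exists fs, is_mixin_with (mix m) fs /\ flabels fs =i lbl (r2M m))
  (mix_wf : forall m, [&& wf (sM m), isRec (r1M m) & isRec (r2M m)])
  (mix_def : forall m, [&& defined (trans L (sM m)), defined (trans L (r1M m))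
                         & defined (trans L (r2M m))])
  (mix_lbl : forall m, lbl (r2M m) != [::] /\ {subset lbl (r2M m) <= L})
  (mix_typ : forall m rho, isRec rho ->
     typ [::] (mix m)
       (TArr (TArr (sM m) (TInt rho (r1M m))) (TArr (sM m) (TPlus rho (r2M m)))))
  (* the statement *)
  (ms : seq IM) (c : IC) (sigma rho : ty) (k : nat) (tau : ctype) :
  wf sigma -> isRec rho ->
  trans L (TArr sigma rho) = Some tau ->
  bcl (repo L sC rC sM r1M r2M) k (pipe_c c ms) tau ->
  typ [::] (pipe_t cls mix c ms) (TArr sigma rho).
Proof.
move=> wsigma rrho etau hbcl.
have wA : wf (TArr sigma rho) by rewrite /= wsigma isRec_wf.
have [untr_tau _] := trans_untr etau wA.
rewrite -cterm_eval_pipe; apply: typ_sub untr_tau.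
apply: bcl_untr_sound hbcl => -[c' | m] S /=.
- rewrite tr_csubst; apply: typ_untr_tr (cls_def c') (cls_typ c').
  by case/andP: (cls_wf c') => /= -> /isRec_wf.
- have [fs [hM hfs]] := mix_form m; have /and3P[ws r1 r2] := mix_wf m.
  exact: typ_mixin_repo hM hfs ws r1 r2 (mix_def m) (mix_typ m) S.
Qed.
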